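(* Let $R$ be a commutative ring. The assignments $(M,C)\mapsto C^\sharp/C^\flat$ (with $T$ acting by $\theta_C$) and $X\mapsto(X,\mathrm{graph}(T_X))$, where $T_X\in\mathrm{End}_R(X)$ is $x\mapsto Tx$, extend to $R$-linear functors $\sharp/\flat\colon\mathrm{Rel}_R\to\mathrm{Mod}\,R[T,T^{-1}]$ (sending a morphism $f\colon(L,B)\to(M,C)$ to $\ell+B^\flat\mapsto f(\ell)+C^\flat$) and $\mathrm{graph}_T\colon\mathrm{Mod}\,R[T,T^{-1}]\to\mathrm{Rel}_R$ (sending $g$ to $g$). Moreover $(\sharp/\flat)\circ\mathrm{graph}_T$ is the identity functor on $\mathrm{Mod}\,R[T,T^{-1}]$.
   Context: An $R$-linear relation on an $R$-module $M$ is a submodule $C\subseteq M\oplus M$; $Cm=\{m':(m,m')\in C\}$, $CS=\bigcup_{m\in S}Cm$, $C^{-1}=\{(y,x):(x,y)\in C\}$, $\mathrm{graph}(f)=\{(x,f(x))\}$. $\mathrm{Rel}_R$ has objects pairs $(M,C)$ with $C$ a relation on $M$, and morphisms $(L,B)\to(M,C)$ the $R$-linear maps $f\colon L\to M$ with $(f(x),f(y))\in C$ for all $(x,y)\in B$. $C''$ is the set of $m\in M$ for which there exists $(m_n)_{n\in\mathbb{N}}$ in $M$ with $m_0=m$ and $m_{n+1}\in Cm_n$ for all $n$; $C'$ the set of those for which such a sequence exists with $m_n=0$ for $n\gg0$; $C^\sharp=C''\cap(C^{-1})''$, $C^\flat=C''\cap(C^{-1})'+(C^{-1})''\cap C'$.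 It is known that the rule $\theta_C(m+C^\flat)=m'+C^\flat$ if and only if $m'\in C^\sharp\cap(C^\flat+Cm)$ gives a well-defined $R$-module automorphism $\theta_C$ of $C^\sharp/C^\flat$; via $T\mapsto\theta_C$ this makes $C^\sharp/C^\flat$ an $R[T,T^{-1}]$-module. *)

From HB Require Import structures.
From mathcomp Require Import all_boot all_algebra.
Set Implicit Arguments. Unset Strict Implicit. Unset Printing Implicit Defensive.
Import GRing.Theory.
Local Open Scope ring_scope.

Definition relation (R : pzRingType) (M : lmodType R) := M -> M -> Prop.

Section Rel.
Variables (R : comPzRingType).

Definition is_linear_relation (M : lmodType R) (C : relation M) : Prop :=
  [/\ C 0 0,
      (forall x y x' y', C x y -> C x' y' -> C (x + x') (y + y'))
    & (forall (a : R) x y, C x y -> C (a *: x) (a *: y))].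

Definition rel_inv (M : lmodType R) (C : relation M) : relation M :=
  fun x y => C y x.

Definition graph (M : lmodType R) (f : M -> M) : relation M :=
  fun x y => y = f x.

Definition is_rel_morphism (L M : lmodType R) (B : relation L)
  (C : relation M) (f : {linear L -> M}) : Prop :=
  forall x y, B x y -> C (f x) (f y).

Definition rel_dd (M : lmodType R) (C : relation M) (m : M) : Prop :=
  exists u : nat -> M, u 0%N = m /\ forall n, C (u n) (u n.+1).

Definition rel_d (M : lmodType R) (C : relation M) (m : M) : Prop :=
  exists u : nat -> M, [/\ u 0%N = m, (forall n, C (u n) (u n.+1))
                        & exists N, forall n, (N <= n)%N -> u n = 0].

Definition rel_sharp (M : lmodType R) (C : relation M) (m : M) : Prop :=
  rel_dd C m /\ rel_dd (rel_inv C) m.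

Definition rel_flat (M : lmodType R) (C : relation M) (m : M) : Prop :=
  exists a b, [/\ m = a + b,
                  rel_dd C a /\ rel_d (rel_inv C) a
                & rel_dd (rel_inv C) b /\ rel_d C b].

(* Representative-level graph of theta_C :
   theta_C (m + C^flat) = m' + C^flat  iff  m' \in C^sharp \cap (C^flat + C m). *)
Definition theta_rel (M : lmodType R) (C : relation M) (m m' : M) : Prop :=
  rel_sharp C m' /\ exists c k, [/\ m' = c + k, rel_flat C c & C m k].

End Rel.

From HB Require Import structures.
From mathcomp Require Import all_boot all_algebra.
Import GRing.Theory.
Local Open Scope ring_scope.

(* Every notion involved is the existence of a sequence along C or C^{-1}, and
   a morphism carries such sequences to sequences of the same kind: this gives
   functoriality of sharp/flat.  For the graph of an automorphism t, forward and
   backward t-orbits show graph(t)^sharp = X, whereas a sequence along graph(t)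
   or its inverse that ends in zeros vanishes identically, because t 0 = 0 and t
   is injective; hence graph(t)^flat = 0 and theta_{graph t} is t itself. *)

Section Relations.
Context {R : comPzRingType}.

Section Homomorphism.
Context {L M : lmodType R} {B : relation L} {C : relation M}.

Lemma homo_rel_inv {f : L -> M} :
  {homo f : x y / B x y >-> C x y} ->
  {homo f : x y / rel_inv B x y >-> rel_inv C x y}.
Proof. by move=> fBC x y /fBC. Qed.

Lemma rel_dd_homo {f : L -> M} :
  {homo f : x y / B x y >-> C x y} -> forall l, rel_dd B l -> rel_dd C (f l).
Proof.
by move=> fBC l [u [<- Bu]]; exists (f \o u); split=> // n; apply: fBC.
Qed.

Lemma rel_d_homo {f : {additive L -> M}} :
  {homo f : x y / B x y >-> C x y} -> forall l, rel_d B l -> rel_d C (f l).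
Proof.
move=> fBC l [u [<- Bu [N uN]]]; exists (f \o u); split=> //.
- by move=> n; apply: fBC.
- by exists N => n leNn /=; rewrite uN ?raddf0.
Qed.

End Homomorphism.

Section SharpFlatHomomorphism.
Context {L M : lmodType R} {B : relation L} {C : relation M}.

Lemma rel_sharp_homo {f : L -> M} :
  {homo f : x y / B x y >-> C x y} ->
  forall l, rel_sharp B l -> rel_sharp C (f l).
Proof.
move=> fBC l [dd_l dd'_l]; split; first exact: (rel_dd_homo fBC).
exact: (rel_dd_homo (homo_rel_inv fBC)).
Qed.

Lemma rel_flat_homo {f : {additive L -> M}} :
  {homo f : x y / B x y >-> C x y} ->
  forall l, rel_flat B l -> rel_flat C (f l).
Proof.
move=> fBC l [a [b [-> [dd_a d'_a] [dd'_b d_b]]]].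
have fBC' := homo_rel_inv fBC.
exists (f a), (f b); split; first exact: raddfD.
- by split; [exact: (rel_dd_homo fBC) | exact: (rel_d_homo fBC')].
- by split; [exact: (rel_dd_homo fBC') | exact: (rel_d_homo fBC)].
Qed.

Lemma theta_rel_homo {f : {additive L -> M}} :
  {homo f : x y / B x y >-> C x y} ->
  forall l l', theta_rel B l l' -> theta_rel C (f l) (f l').
Proof.
move=> fBC l l' [sharp_l' [c [k [def_l' flat_c Blk]]]].
split; first exact: (rel_sharp_homo fBC).
exists (f c), (f k); split; first by rewrite def_l' raddfD.
- exact: (rel_flat_homo fBC).
- exact: fBC.
Qed.

End SharpFlatHomomorphism.

Section Zero.
Context {X : lmodType R} {P : relation X}.

Lemma rel_d_eq0 {x} : rel_d P x -> (forall a, P a 0 -> a = 0) -> x = 0.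
Proof.
move=> [u [<- Pu [N uN]]] P_0.
suff u0 d n : (N <= n + d)%N -> u n = 0 by apply: (u0 N).
elim: d n => [|d IHd] n leN; first by apply: uN; rewrite addn0 in leN.
by apply: P_0; rewrite -(IHd n.+1) ?addSn -?addnS.
Qed.

Lemma rel_flat0 : P 0 0 -> rel_flat P 0.
Proof.
move=> P00.
have dd0 Q : Q 0 0 -> rel_dd Q (0 : X) by exists (fun=> 0).
have d0 Q : Q 0 0 -> rel_d Q (0 : X).
  by exists (fun=> 0); split=> //; exists 0%N.
exists 0, 0; split; first by rewrite addr0.
- by split; [apply: dd0 | apply: d0].
- by split; [apply: dd0 | apply: d0].
Qed.

End Zero.

Section Graph.
Variables (X : lmodType R) (t : {linear X -> X}).

Lemma graph_linear_relation : is_linear_relation (graph t).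
Proof.
by split=> [|x y x' y' -> ->|a x y ->];
  rewrite /graph ?raddf0 ?linearD ?linearZ.
Qed.

Lemma graph_rel_morphism (Y : lmodType R) (s : {linear Y -> Y})
    (g : {linear X -> Y}) :
  (forall x, g (t x) = s (g x)) -> is_rel_morphism (graph t) (graph s) g.
Proof. by move=> gts x y ->; rewrite /graph gts. Qed.

Lemma rel_dd_graph x : rel_dd (graph t) x.
Proof. by exists (fun n => iter n t x). Qed.

Lemma rel_dd_inv_graph {t' : X -> X} : cancel t' t ->
  forall x, rel_dd (rel_inv (graph t)) x.
Proof.
move=> t'K x; exists (fun n => iter n t' x); split=> // n.
by rewrite /rel_inv /graph /= t'K.
Qed.

Lemma rel_sharp_graph : bijective t -> forall x, rel_sharp (graph t) x.
Proof.
case=> t' _ t'K x; split; [exact: rel_dd_graph | exact: (rel_dd_inv_graph t'K)].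
Qed.

Lemma rel_flat_graph : injective t -> forall x, rel_flat (graph t) x <-> x = 0.
Proof.
move=> t_inj x; split=> [|->]; last by apply: rel_flat0; rewrite /graph raddf0.
move=> [a [b [-> [_ d_a] [_ d_b]]]].
rewrite (rel_d_eq0 d_a) => [|a' ->]; last by rewrite raddf0.
by rewrite (rel_d_eq0 d_b) ?addr0 // => b' tb'0; apply: t_inj; rewrite raddf0.
Qed.

Lemma theta_rel_graph : bijective t ->
  forall x x', theta_rel (graph t) x x' <-> x' = t x.
Proof.
move=> t_bij x x'; have /rel_flat_graph flat0 := bij_inj t_bij.
split=> [[_ [c [k [-> /flat0 -> ->]]]] | ->]; first by rewrite add0r.
split; first exact: rel_sharp_graph.
by exists 0, (t x); split; rewrite ?add0r //; apply/flat0.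
Qed.

End Graph.

End Relations.

Theorem lemma4p7 (R : comPzRingType) :
  (* sharp/flat is a well-defined functor Rel_R -> Mod R[T,T^-1]:
     a morphism f : (L,B) -> (M,C) induces l + B^flat |-> f l + C^flat,
     i.e. f maps B^sharp into C^sharp and B^flat into C^flat, and the
     induced map intertwines theta_B and theta_C (T-linearity). *)
  (forall (L M : lmodType R) (B : relation L) (C : relation M)
          (f : {linear L -> M}),
      is_linear_relation B -> is_linear_relation C ->
      is_rel_morphism B C f ->
      [/\ (forall l, rel_sharp B l -> rel_sharp C (f l)),
          (forall l, rel_flat B l -> rel_flat C (f l))
        & (forall l l', rel_sharp B l -> theta_rel B l l' ->
                        theta_rel C (f l) (f l'))]) /\
  (* graph_T is a functor Mod R[T,T^-1] -> Rel_R: an R[T,T^-1]-module is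
     an R-module X with an R-linear automorphism t (the action of T). *)
  (forall (X Y : lmodType R) (t : {linear X -> X}) (s : {linear Y -> Y}),
      bijective t -> bijective s ->
      is_linear_relation (graph t) /\
      (forall g : {linear X -> Y}, (forall x, g (t x) = s (g x)) ->
         is_rel_morphism (graph t) (graph s) g)) /\
  (* (sharp/flat) o graph_T = Id: graph(t)^sharp = X, graph(t)^flat = 0,
     and theta_{graph t} = t (on morphisms, g |-> g is then immediate). *)
  (forall (X : lmodType R) (t : {linear X -> X}),
      bijective t ->
      [/\ (forall x, rel_sharp (graph t) x),
          (forall x, rel_flat (graph t) x <-> x = 0)
        & (forall x x', theta_rel (graph t) x x' <-> x' = t x)]).
Proof.
split; last split.
- move=> L M B C f _ _ fBC; split.
  + exact: (rel_sharp_homo fBC).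
  + exact: (rel_flat_homo fBC).
  + by move=> l l' _; apply: (theta_rel_homo fBC).
- move=> X Y t s _ _; split; first exact: graph_linear_relation.
  exact: graph_rel_morphism.
- move=> X t t_bij; split.
  + exact: rel_sharp_graph.
  + exact: rel_flat_graph (bij_inj t_bij).
  + exact: theta_rel_graph.
Qed.
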